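(* Let $\Pi = (\mathcal{A}, \mathcal{E}, \mathcal{R})$ be an epistemic logic program, $\Phi \subseteq \mathcal{E}$ a guess, and suppose $\mathcal{Y} = \mathcal{SE}_\Pi(\Phi)$ is non-empty. Then there is a set $\mathcal{C} \subseteq \{ Y \mid (X, Y) \in \mathcal{Y} \}$ of size polynomial in the size of $\Pi$ that is $\Phi$-compatible w.r.t. $\mathcal{E}$.
   Context: A literal over a set of atoms $\mathcal{A}$ is an atom $a$ or $\neg a$. An interpretation is $I\subseteq\mathcal{A}$; $I\models a$ iff $a\in I$, $I\models\neg\ell$ iff $I\not\models\ell$. A (plain) logic program $(\mathcal{A},\mathcal{R})$ has rules $a_1\vee\cdots\vee a_l \leftarrow a_{l+1},\ldots,a_m,\neg\ell_1,\ldots,\neg\ell_n$ ($\ell_i$ literals); $H(r)$ head, $B(r)$ body, $B^+(r)=\{a_{l+1},\ldots,a_m\}$; $M\models r$ iff $M\models B(r)$ implies $M\cap H(r)\neq\emptyset$; $\mathrm{Mods}(\Pi)$ is the set of models. GL-reduct: $\Pi^I=(\mathcal{A},\{H(r)\leftarrow B^+(r)\mid r\in\mathcal{R},\ I\models\neg\ell\ \forall\neg\ell\in B(r)\})$ ($\neg\neg\neg a$ treated as $\neg a$). An SE-model of $\Pi$ is $(X,Y)$ with $X\subseteq Y\subseteq\mathcal{A}$, $Y\models\Pi$, $X\models\Pi^Y$; $\mathrm{SE}(\Pi)$ the set of SE-models. An ELP is $(\mathcal{A},\mathcal{E},\mathcal{R})$ with $\mathcal{E}$ a set of epistemic literals $\mathbf{not}\,\ell$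 and rules $a_1\vee\cdots\vee a_k\leftarrow \ell_1,\ldots,\ell_m,\xi_1,\ldots,\xi_j,\neg\xi_{j+1},\ldots,\neg\xi_n$, $\xi_i\in\mathcal{E}$. A guess is $\Phi\subseteq\mathcal{E}$; $\mathcal{I}$ is $\Phi$-compatible w.r.t. $\mathcal{E}$ iff $\mathcal{I}\neq\emptyset$, every $\mathbf{not}\,\ell\in\Phi$ has some $I\in\mathcal{I}$ with $I\not\models\ell$, and every $\mathbf{not}\,\ell\in\mathcal{E}\setminus\Phi$ has $I\models\ell$ for all $I\in\mathcal{I}$. The epistemic reduct $\Pi^\Phi=(\mathcal{A},\mathcal{R}^\Phi)$ replaces each $\mathbf{not}\,\ell\in\Phi$ by $\top$ and every other $\mathbf{not}$ by $\neg$. $\Phi$ is realizable in $\Pi$ iff some subset of $\mathrm{Mods}(\Pi^\Phi)$ is $\Phi$-compatible w.r.t. $\mathcal{E}$. SE-function: $\mathcal{SE}_\Pi(\Phi)=\mathrm{SE}(\Pi^\Phi)$ if $\Phi$ is realizable in $\Pi$, else $\emptyset$. *)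

From mathcomp Require Import all_boot.
Set Implicit Arguments. Unset Strict Implicit. Unset Printing Implicit Defensive.

Section ELP.
Variable A : finType. (* the set of atoms is the whole finite type A *)

(* A literal over A: (a, true) is the atom a, (a, false) is ~a. *)
Definition lit := (A * bool)%type.
Definition interp := {set A}.

Definition sat_lit (I : interp) (l : lit) : bool :=
  if l.2 then l.1 \in I else l.1 \notin I.

(* Plain rule: a_1 v ... v a_l <- a_{l+1},...,a_m, ~l_1,...,~l_n.
   [pbneg] lists the literals l_i (each occurring negated in the body). *)
Record prule := PRule { phead : seq A; pbpos : seq A; pbneg : seq lit }.
Definition pprog := seq prule.

Definition sat_body (M : interp) (r : prule) : bool :=
  all (fun a => a \in M) (pbpos r) && all (fun l => ~~ sat_lit M l) (pbneg r).
Definition sat_prule (M : interp) (r : prule) : bool :=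
  sat_body M r ==> has (fun a => a \in M) (phead r).
Definition is_model (P : pprog) (M : interp) : bool := all (sat_prule M) P.
Definition Mods (P : pprog) : {set interp} := [set M | is_model P M].

Definition GL (P : pprog) (I : interp) : pprog :=
  [seq PRule (phead r) (pbpos r) [::] | r <- P & all (fun l => ~~ sat_lit I l) (pbneg r)].

Definition SE (P : pprog) : {set interp * interp} :=
  [set XY : interp * interp | (XY.1 \subset XY.2) && is_model P XY.2 && is_model (GL P XY.2) XY.1].

(* Epistemic rules: a_1 v ... v a_k <- l_1,...,l_m, xi_1..xi_j, ~xi_{j+1}..~xi_n.
   An epistemic literal "not l" is represented by the literal l. *)
Record erule := ERule { ehead : seq A; elits : seq lit; eposep : seq lit; enegep : seq lit }.
Record elp := ELP { eE : {set lit}; eR : seq erule }.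

Definition wf_elp (Pi : elp) : Prop :=
  all (fun r => all (fun x => x \in eE Pi) (eposep r) && all (fun x => x \in eE Pi) (enegep r))
      (eR Pi).

Definition flip (l : lit) : lit := (l.1, ~~ l.2).

(* Epistemic reduct of one rule: "not l" in Phi becomes T, otherwise ~l.
   A body containing ~T (i.e. ~xi with xi in Phi) is false: the rule is dropped.
   ~(~l) with l = ~a is ~~~a, treated as ~a; with l = a it is ~~a. In both
   cases the plain negative-body literal is [flip l]. *)
Definition ered (Phi : {set lit}) (r : erule) : option prule :=
  if has (fun x => x \in Phi) (enegep r) then None else
  Some (PRule (ehead r)
         [seq l.1 | l <- elits r & l.2]
         ([seq (l.1, true) | l <- elits r & ~~ l.2]
          ++ [seq l | l <- eposep r & l \notin Phi]
          ++ [seq flip l | l <- enegep r])).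

Definition ereduct (Pi : elp) (Phi : {set lit}) : pprog := pmap (ered Phi) (eR Pi).

Definition compatible (E Phi : {set lit}) (II : {set interp}) : bool :=
  [&& II != set0,
      [forall x in Phi, [exists I in II, ~~ sat_lit I x]] &
      [forall x in E :\: Phi, [forall I in II, sat_lit I x]]].

Definition realizable (Pi : elp) (Phi : {set lit}) : bool :=
  [exists II : {set interp}, (II \subset Mods (ereduct Pi Phi)) && compatible (eE Pi) Phi II].

Definition SEfun (Pi : elp) (Phi : {set lit}) : {set interp * interp} :=
  if realizable Pi Phi then SE (ereduct Pi Phi) else set0.

Definition elp_size (Pi : elp) : nat :=
  #|A| + #|eE Pi| +
  sumn [seq (size (ehead r) + size (elits r) + size (eposep r) + size (enegep r)).+1
       | r <- eR Pi].

End ELP.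

(** Every total interpretation [Y] that is a model of a plain program gives
    the SE-model [(Y, Y)], so the models making [Phi] realizable all occur as
    second components of [SE_Pi(Phi)]. From such a [Phi]-compatible family it
    suffices to keep one model and, for each [not l] in [Phi], one model
    falsifying [l]: at most [|Phi| + 1] interpretations, which is linear in
    the size of [Pi]. *)

From mathcomp Require Import all_boot.

Set Implicit Arguments.
Unset Strict Implicit.
Unset Printing Implicit Defensive.

Section SmallCompatibleFamily.
Variable A : finType.

Lemma model_diag_SE (P : pprog A) (Y : interp A) :
  Y \in Mods P -> (Y, Y) \in SE P.
Proof.
rewrite !inE /= subxx => modY; rewrite modY /=.
rewrite /is_model /GL all_map all_filter.
elim: P modY => //= r P IH /andP [satr modP].
rewrite IH // andbT; apply/implyP => negY; move: satr.
by rewrite /sat_prule /sat_body /= negY andbT.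
Qed.

Lemma Mods_sub_SE_snd (P : pprog A) :
  Mods P \subset [set XY.2 | XY in SE P].
Proof.
by apply/subsetP => Y modY; apply/imsetP; exists (Y, Y); rewrite ?model_diag_SE.
Qed.

Lemma compatible_small_subfamily (E Phi : {set lit A}) (II : {set interp A}) :
  compatible E Phi II ->
  exists C : {set interp A},
    [/\ C \subset II, #|C| <= #|Phi|.+1 & compatible E Phi C].
Proof.
case/and3P => /set0Pn [I0 II_I0] /forall_inP falsified /forall_inP satisfied.
pose falsifier x := odflt I0 [pick I in II | ~~ sat_lit I x].
have falsifierP x : x \in Phi -> falsifier x \in II /\ ~~ sat_lit (falsifier x) x.
  move=> Phi_x; rewrite /falsifier; case: pickP => [I /andP [] //|none].
  have /exists_inP [I II_I negI] := falsified x Phi_x.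
  by move: (none I); rewrite II_I negI.
set C := I0 |: [set falsifier x | x in Phi].
have subC : C \subset II.
  apply/subsetP => I; rewrite in_setU1 => /orP [/eqP -> //|/imsetP [x Phi_x ->]].
  by case: (falsifierP x Phi_x).
exists C; split=> //.
  by rewrite cardsU1 addnC -addn1 leq_add ?leq_b1 ?leq_imset_card.
apply/and3P; split.
- by apply/set0Pn; exists I0; rewrite setU11.
- apply/forall_inP => x Phi_x; apply/exists_inP; exists (falsifier x).
    by rewrite setU1r // imset_f.
  by case: (falsifierP x Phi_x).
- apply/forall_inP => x Ex; apply/forall_inP => I C_I.
  exact: forall_inP (satisfied x Ex) I (subsetP subC I C_I).
Qed.

Lemma card_eE_le_elp_size (Pi : elp A) : #|eE Pi| <= elp_size Pi.
Proof. by rewrite /elp_size -addnA addnCA leq_addr. Qed.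

End SmallCompatibleFamily.

Theorem lemma3 :
  exists c k : nat,
  forall (A : finType) (Pi : elp A) (Phi : {set lit A}),
    wf_elp Pi -> Phi \subset eE Pi ->
    SEfun Pi Phi != set0 ->
    exists C : {set {set A}},
      [/\ C \subset [set XY.2 | XY in SEfun Pi Phi],
          #|C| <= c * (elp_size Pi) ^ k + c
        & compatible (eE Pi) Phi C].
Proof.
exists 1, 1 => A Pi Phi _ subPhi.
rewrite /SEfun; case: ifP => [realPhi _|_]; last by rewrite eqxx.
have /existsP [II /andP [modsII compII]] := realPhi.
have [C [subC cardC compC]] := compatible_small_subfamily compII.
exists C; split=> //.
- exact: subset_trans subC (subset_trans modsII (Mods_sub_SE_snd _)).
- rewrite mul1n expn1 addn1 (leq_trans cardC) // ltnS.
  exact: leq_trans (subset_leq_card subPhi) (card_eE_le_elp_size Pi).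
Qed.
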